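(* Let $\varphi=\frac{1+\sqrt5}{2}$ and for every integer $k$ let $F_k=\frac{\varphi^k-(-1/\varphi)^k}{\varphi+1/\varphi}$. On the complex vector space with basis $\{|n_1,n_2\rangle:n_1,n_2\ge0\}$ define, for $i=1,2$, operators $N_i$, $b_i$, $b_i^+$ acting on the $i$-th index by $N_1|n_1,n_2\rangle=n_1|n_1,n_2\rangle$, $b_1^+|n_1,n_2\rangle=\sqrt{F_{n_1+1}}|n_1+1,n_2\rangle$, $b_1|n_1,n_2\rangle=\sqrt{F_{n_1}}|n_1-1,n_2\rangle$ (zero if $n_1=0$), and analogously for index 2. Let $$J_+^F=b_1^+b_2,\qquad J_-^F=b_2^+b_1,\qquad J_z^F=\frac{N_1-N_2}{2},$$ and let $(-1)^{N_i}$, $F_{2J_z}$, $F_{-2J_z}$ be the diagonal operators acting on $|n_1,n_2\rangle$ by $(-1)^{n_i}$, $F_{n_1-n_2}$, $F_{n_2-n_1}$ respectively. Then $$[J_+^F,J_-^F]=(-1)^{N_2}F_{2J_z}=-(-1)^{N_1}F_{-2J_z},\qquad [J_z^F,J_\pm^F]=\pm J_\pm^F.$$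
   Context: $[A,B]=AB-BA$. *)

From HB Require Import structures.
From mathcomp Require Import all_boot all_order all_algebra.
From mathcomp Require Import reals complex.
Set Implicit Arguments. Unset Strict Implicit. Unset Printing Implicit Defensive.
Import Order.TTheory GRing.Theory Num.Theory.
Local Open Scope ring_scope.
Local Open Scope complex_scope.

Section Fib.
Variable R : realType.

Definition phi : R := (1 + Num.sqrt 5) / 2.

Definition Fib (k : int) : R :=
  (phi ^ k - (- phi^-1) ^ k) / (phi + phi^-1).

(* Vectors: coefficient functions (n1,n2) |-> coefficient of |n1,n2>. *)
Definition vec := nat -> nat -> R[i].
Definition op := vec -> vec.

Definition csqrtF (n : nat) : R[i] := (Num.sqrt (Fib n%:Z))%:C.

Definition N1 : op := fun v m1 m2 => m1%:R * v m1 m2.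
Definition N2 : op := fun v m1 m2 => m2%:R * v m1 m2.

(* b1^+ |n1,n2> = sqrt(F_{n1+1}) |n1+1,n2>, extended linearly (coefficientwise) *)
Definition bp1 : op := fun v m1 m2 =>
  if m1 is m.+1 then csqrtF m1 * v m m2 else 0.
Definition bp2 : op := fun v m1 m2 =>
  if m2 is m.+1 then csqrtF m2 * v m1 m else 0.

(* b1 |n1,n2> = sqrt(F_{n1}) |n1-1,n2> (zero if n1 = 0) *)
Definition b1 : op := fun v m1 m2 => csqrtF m1.+1 * v m1.+1 m2.
Definition b2 : op := fun v m1 m2 => csqrtF m2.+1 * v m1 m2.+1.

Definition opmul (A B : op) : op := fun v => A (B v).
Definition opadd (A B : op) : op := fun v m1 m2 => A v m1 m2 + B v m1 m2.
Definition opopp (A : op) : op := fun v m1 m2 => - A v m1 m2.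
Definition opscale (c : R[i]) (A : op) : op := fun v m1 m2 => c * A v m1 m2.

Definition comm (A B : op) : op := opadd (opmul A B) (opopp (opmul B A)).

Definition Jp : op := opmul bp1 b2.
Definition Jm : op := opmul bp2 b1.
Definition Jz : op := opscale (2%:R)^-1 (opadd N1 (opopp N2)).

Definition sgnN1 : op := fun v m1 m2 => (-1) ^+ m1 * v m1 m2.
Definition sgnN2 : op := fun v m1 m2 => (-1) ^+ m2 * v m1 m2.
Definition F2Jz : op := fun v m1 m2 => (Fib (m1%:Z - m2%:Z))%:C * v m1 m2.
Definition Fm2Jz : op := fun v m1 m2 => (Fib (m2%:Z - m1%:Z))%:C * v m1 m2.

End Fib.

(* With psi = -1/phi, F_k is the Lucas sequence (phi^k - psi^k)/(phi - psi) of the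
   roots of X^2 - X - 1, so phi + psi = 1 and phi psi = -1.  For any Lucas sequence
   U_k = (a^k - b^k)/(a - b) one has (ab)^n U_(m-n) = (a^m b^n - a^n b^m)/(a - b);
   this gives both d'Ocagne's identity F_m F_(n+1) - F_(m+1) F_n = (-1)^n F_(m-n)
   and (-1)^n F_(m-n) = -(-1)^m F_(n-m).  The recurrence makes F_n >= 0 for n >= 0,
   so the square roots are real and J_+J_-, J_-J_+ are diagonal with eigenvalues
   F_(n1) F_(n2+1) and F_(n1+1) F_(n2): their difference is d'Ocagne's identity.
   Finally J_z is diagonal and J_+, J_- shift n1 - n2 by +2 and -2. *)

From Pilot Require Import Defs.
From HB Require Import structures.
From mathcomp Require Import all_boot all_order all_algebra.
From mathcomp Require Import reals complex.
From mathcomp Require Import ring.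
From Stdlib Require Import FunctionalExtensionality.
Set Implicit Arguments. Unset Strict Implicit. Unset Printing Implicit Defensive.
Import Order.TTheory GRing.Theory Num.Theory.
Local Open Scope ring_scope.

Lemma mulr_exprM_exprzB (F : fieldType) (x y : F) (m n : nat) : x != 0 ->
  (x * y) ^+ n * x ^ (m%:Z - n%:Z) = x ^+ m * y ^+ n.
Proof.
move=> x_neq0.
rewrite exprzDr ?unitfE // -exprnN -!exprnP exprMn.
by field; rewrite expf_neq0.
Qed.

Section Lucas.
Variables (F : fieldType) (a b : F).
Hypotheses (a_neq0 : a != 0) (b_neq0 : b != 0) (a_neq_b : a != b).

Definition lucas (k : int) : F := (a ^ k - b ^ k) / (a - b).

Lemma lucas0 : lucas 0 = 0.
Proof. by rewrite /lucas !expr0z subrr mul0r. Qed.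

Lemma lucas1 : lucas 1 = 1.
Proof. by rewrite /lucas !expr1z divff // subr_eq0. Qed.

Lemma lucasSS (n : nat) :
  lucas n.+2 = (a + b) * lucas n.+1 - a * b * lucas n.
Proof. rewrite /lucas -!exprnP !exprS; field; by rewrite subr_eq0. Qed.

Lemma mulr_lucasB (m n : nat) :
  (a * b) ^+ n * lucas (m%:Z - n%:Z) = (a ^+ m * b ^+ n - a ^+ n * b ^+ m) / (a - b).
Proof.
rewrite /lucas mulrA mulrBr mulr_exprM_exprzB // [a * b]mulrC.
by rewrite mulr_exprM_exprzB // [b ^+ m * _]mulrC.
Qed.

Lemma lucas_dOcagne (m n : nat) :
  lucas m * lucas n.+1 - lucas m.+1 * lucas n = (a * b) ^+ n * lucas (m%:Z - n%:Z).
Proof. rewrite mulr_lucasB /lucas -!exprnP !exprS; field; by rewrite subr_eq0. Qed.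

Lemma mulr_lucasB_sym (m n : nat) :
  (a * b) ^+ n * lucas (m%:Z - n%:Z) = - ((a * b) ^+ m * lucas (n%:Z - m%:Z)).
Proof. by rewrite !mulr_lucasB -[RHS]mulNr opprB. Qed.

End Lucas.

Section Fibonacci.
Variable R : realType.

Local Notation phi := (phi R).
Local Notation psi := (- phi^-1).
Local Notation Fib := (Fib R).

Lemma phi_gt0 : 0 < phi.
Proof. by rewrite divr_gt0 // ltr_pwDl ?sqrtr_ge0. Qed.

Lemma phi_neq0 : phi != 0.
Proof. by rewrite gt_eqF ?phi_gt0. Qed.

Lemma phiV : phi^-1 = phi - 1.
Proof.
apply: (mulfI phi_neq0); rewrite mulfV ?phi_neq0 //.
have sqrt5 : Num.sqrt 5 ^+ 2 = 5 :> R by rewrite sqr_sqrtr.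
rewrite /Defs.phi; move: sqrt5; set s := Num.sqrt 5 => sqrt5.
have -> : (1 + s) / 2 * ((1 + s) / 2 - 1) = (s ^+ 2 - 1) / 4 by field.
by rewrite sqrt5; field.
Qed.

Lemma phi_add_psi : phi + psi = 1.
Proof. by rewrite phiV opprB addrC subrK. Qed.

Lemma phi_mul_psi : phi * psi = -1.
Proof. by rewrite mulrN mulfV ?phi_neq0. Qed.

Lemma FibE (k : int) : Fib k = lucas phi psi k.
Proof. by rewrite /Defs.Fib /lucas opprK. Qed.

Lemma Fib0 : Fib 0 = 0.
Proof. by rewrite FibE lucas0. Qed.

Lemma psi_neq0 : psi != 0.
Proof. by rewrite oppr_eq0 invr_eq0 phi_neq0. Qed.

Lemma phi_neq_psi : phi != psi.
Proof.
by rewrite gt_eqF // (@lt_trans _ _ 0) ?phi_gt0 // oppr_lt0 invr_gt0 phi_gt0.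
Qed.

Lemma Fib_ge0 (n : nat) : 0 <= Fib n.
Proof.
suff : 0 <= Fib n /\ 0 <= Fib n.+1 by case.
elim: n => [|n [Fn_ge0 FSn_ge0]]; rewrite !FibE.
  by rewrite lucas0 lucas1 ?phi_neq_psi.
rewrite lucasSS ?phi_neq_psi // phi_add_psi phi_mul_psi mul1r mulN1r opprK.
by rewrite -!FibE addr_ge0.
Qed.

Lemma Fib_dOcagne (m n : nat) :
  Fib m * Fib n.+1 - Fib m.+1 * Fib n = (-1) ^+ n * Fib (m%:Z - n%:Z).
Proof.
by rewrite !FibE lucas_dOcagne ?phi_neq0 ?psi_neq0 ?phi_neq_psi // phi_mul_psi.
Qed.

Lemma Fib_sub_sym (m n : nat) :
  (-1) ^+ n * Fib (m%:Z - n%:Z) = - ((-1) ^+ m * Fib (n%:Z - m%:Z)).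
Proof. by rewrite !FibE -phi_mul_psi mulr_lucasB_sym ?phi_neq0 ?psi_neq0. Qed.

End Fibonacci.

Local Open Scope complex_scope.

Section Operators.
Variable R : realType.

Local Notation Fib := (Fib R).
Local Notation csqrtF := (csqrtF R).
Local Notation op := (op R).

Lemma op_ext (A B : op) : (forall v m1 m2, A v m1 m2 = B v m1 m2) -> A = B.
Proof.
move=> eqAB; do 3!apply: functional_extensionality => ?; exact: eqAB.
Qed.

Lemma csqrtF_mul (n : nat) : csqrtF n * csqrtF n = (Fib n)%:C.
Proof. by rewrite -rmorphM -expr2 sqr_sqrtr ?Fib_ge0. Qed.

Lemma Fib_mul_csqrt (m n : nat) :
  (Fib m * Fib n)%:C = csqrtF m * csqrtF m * (csqrtF n * csqrtF n).
Proof. by rewrite !csqrtF_mul rmorphM. Qed.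

Lemma csqrtF0 : csqrtF 0 = 0.
Proof. by rewrite /Defs.csqrtF Fib0 sqrtr0. Qed.

(* The boundary case [m1 = 0] is absorbed by [csqrtF 0 = 0]. *)
Lemma JpE v m1 m2 :
  @Jp R v m1 m2 = csqrtF m1 * csqrtF m2.+1 * v m1.-1 m2.+1.
Proof. by case: m1 => [|m1]; rewrite /Jp /opmul /= ?csqrtF0 ?mul0r ?mulrA. Qed.

Lemma JmE v m1 m2 :
  @Jm R v m1 m2 = csqrtF m2 * csqrtF m1.+1 * v m1.+1 m2.-1.
Proof. by case: m2 => [|m2]; rewrite /Jm /opmul /= ?csqrtF0 ?mul0r ?mulrA. Qed.

Lemma JzE v m1 m2 : @Jz R v m1 m2 = (m1%:R - m2%:R) / 2 * v m1 m2.
Proof. by rewrite /Jz /opscale /opadd /opopp /N1 /N2; ring. Qed.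

Lemma JpJmE v m1 m2 :
  opmul (@Jp R) (@Jm R) v m1 m2 = (Fib m1 * Fib m2.+1)%:C * v m1 m2.
Proof.
rewrite /opmul JpE JmE /=.
case: m1 => [|m1]; first by rewrite csqrtF0 Fib0 !mul0r.
by rewrite Fib_mul_csqrt /=; ring.
Qed.

Lemma JmJpE v m1 m2 :
  opmul (@Jm R) (@Jp R) v m1 m2 = (Fib m1.+1 * Fib m2)%:C * v m1 m2.
Proof.
rewrite /opmul JmE JpE /=.
case: m2 => [|m2]; first by rewrite csqrtF0 Fib0 mulr0 !mul0r.
by rewrite Fib_mul_csqrt /=; ring.
Qed.

Lemma comm_Jp_Jm : comm (@Jp R) (@Jm R) = opmul (@sgnN2 R) (@F2Jz R).
Proof.
apply: op_ext => v m1 m2.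
rewrite /comm /opadd /opopp JpJmE JmJpE -mulrBl -raddfB /=.
by rewrite Fib_dOcagne /opmul /sgnN2 /F2Jz rmorphM rmorphXn rmorphN1 mulrA.
Qed.

Lemma sgnN2_F2Jz :
  opmul (@sgnN2 R) (@F2Jz R) = opopp (opmul (@sgnN1 R) (@Fm2Jz R)).
Proof.
apply: op_ext => v m1 m2.
rewrite /opmul /opopp /sgnN2 /sgnN1 /F2Jz /Fm2Jz !mulrA -mulNr.
have signC k : (-1) ^+ k = ((-1) ^+ k : R)%:C by rewrite rmorphXn rmorphN1.
by rewrite !signC -!rmorphM -rmorphN Fib_sub_sym.
Qed.

Lemma comm_Jz_Jp : comm (@Jz R) (@Jp R) = @Jp R.
Proof.
apply: op_ext => v m1 m2.
rewrite /comm /opadd /opopp /opmul !JzE !JpE !JzE.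
case: m1 => [|m1]; first by rewrite csqrtF0 !mul0r !mulr0 subr0.
by rewrite /=; field.
Qed.

Lemma comm_Jz_Jm : comm (@Jz R) (@Jm R) = opopp (@Jm R).
Proof.
apply: op_ext => v m1 m2.
rewrite /comm /opadd /opopp /opmul !JzE !JmE !JzE.
case: m2 => [|m2]; first by rewrite csqrtF0 !mul0r !mulr0 subr0 oppr0.
by rewrite /=; field.
Qed.

End Operators.

Theorem mainTheorem14 (R : realType) :
  [/\ comm (@Jp R) (@Jm R) = opmul (@sgnN2 R) (@F2Jz R),
      opmul (@sgnN2 R) (@F2Jz R) = opopp (opmul (@sgnN1 R) (@Fm2Jz R)),
      comm (@Jz R) (@Jp R) = @Jp R
    & comm (@Jz R) (@Jm R) = opopp (@Jm R)].
Proof.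
split.
- exact: comm_Jp_Jm.
- exact: sgnN2_F2Jz.
- exact: comm_Jz_Jp.
- exact: comm_Jz_Jm.
Qed.
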